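(* Let $M,N,p\ge1$ and $(a,b)\in\mathbb Z_M^p\times\mathbb Z_N^p$ be such that the multisets $\{(a_y,b_y)\}_{y=1}^p$ and $\{(a_y,b_{y+1})\}_{y=1}^p$ are different. For $r\ge1$ let $$K_p^r(a,b)=\frac{1}{M^r}\#\{i\in\mathbb Z_M^r:\ (E_x)\text{ holds for all }x=1,\dots,r\}.$$ Then $K_p^r(a,b)\to0$ as $r\to\infty$.
   Context: Cyclic conventions: $i_{r+1}=i_1$, $b_{p+1}=b_1$. For $x\in\{1,\dots,r\}$, condition $(E_x)$ says that the multisets $\{(i_x+a_y,b_y),(i_{x+1}+a_y,b_{y+1}):y=1,\dots,p\}$ and $\{(i_x+a_y,b_{y+1}),(i_{x+1}+a_y,b_y):y=1,\dots,p\}$ of elements of $\mathbb Z_M\times\mathbb Z_N$ (counted with multiplicity) coincide. *)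

From HB Require Import structures.
From mathcomp Require Import all_boot all_order all_algebra.
Set Implicit Arguments. Unset Strict Implicit. Unset Printing Implicit Defensive.
Import Order.TTheory GRing.Theory Num.Theory.

(* Z_M is represented by 'I_M (values 0..M-1), addition is mod M;
   elements of Z_M x Z_N are pairs of nats (canonical residues).
   Cyclic successor on indices 'I_p / 'I_r is ordS (y+1 mod p). *)

Definition msetL (M N p r : nat) (a : 'I_p -> 'I_M) (b : 'I_p -> 'I_N)
  (i : 'I_r -> 'I_M) (x : 'I_r) : seq (nat * nat) :=
  [seq (((i x + a y) %% M)%N, val (b y)) | y : 'I_p] ++
  [seq (((i (ordS x) + a y) %% M)%N, val (b (ordS y))) | y : 'I_p].

Definition msetR (M N p r : nat) (a : 'I_p -> 'I_M) (b : 'I_p -> 'I_N)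
  (i : 'I_r -> 'I_M) (x : 'I_r) : seq (nat * nat) :=
  [seq (((i x + a y) %% M)%N, val (b (ordS y))) | y : 'I_p] ++
  [seq (((i (ordS x) + a y) %% M)%N, val (b y)) | y : 'I_p].

Definition condE (M N p r : nat) (a : 'I_p -> 'I_M) (b : 'I_p -> 'I_N)
  (i : 'I_r -> 'I_M) (x : 'I_r) : bool :=
  perm_eq (msetL a b i x) (msetR a b i x).

Definition Kpr (M N p : nat) (a : 'I_p -> 'I_M) (b : 'I_p -> 'I_N) (r : nat) : rat :=
  (#|[set i : {ffun 'I_r -> 'I_M} | [forall x : 'I_r, condE a b i x]]|%:R
   / (M ^ r)%N%:R)%R.

From HB Require Import structures.
From mathcomp Require Import all_boot all_order all_algebra zify.
Import Order.TTheory GRing.Theory Num.Theory.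
Set Implicit Arguments. Unset Strict Implicit.

(* Condition (E_x) only depends on the pair (i_x, i_{x+1}). Some pair (u0, v0)
   violates it: otherwise, counting a fixed element of Z_M x Z_N on both sides
   of (E) for (u, 0) and summing over u in Z_M, the u-dependent terms add up to
   the same number on both sides, and what is left is M times the
   multiplicities in the two multisets of the hypothesis, which would then be
   equal. An admissible i thus avoids (u0, v0) on each of the floor(r/2)
   disjoint pairs of coordinates (2j, 2j+1), whence
   K_p^r(a,b) <= (1 - 1/M^2)^floor(r/2) <= (M^2 - 1) / floor(r/2). *)

Lemma count_map_ord (T : eqType) p (P : pred T) (f : 'I_p -> T) :
  count P [seq f y | y : 'I_p] = \sum_(y < p) P (f y).
Proof. by rewrite count_map -sum1_count big_mkcond -big_enum. Qed.

Lemma sum_ord_addn_mod M a c : c < M -> \sum_(u < M) ((u + a) %% M == c) = 1.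
Proof.
move=> cM; have M_gt0 : 0 < M by lia.
pose shift (u : 'I_M) := Ordinal (ltn_pmod (u + a) M_gt0).
have shift_inj : injective shift.
  move=> u v /(congr1 val) /eqP /=; rewrite eqn_modDr !modn_small //.
  by move/eqP/val_inj.
rewrite -[LHS]/(\sum_(u < M) (val (shift u) == c)).
rewrite -(reindex_inj (P := xpredT) (F := fun u : 'I_M => (val u == c) : nat) shift_inj).
rewrite (bigD1 (Ordinal cM)) //= eqxx big1 // => u neq_uc.
by apply/eqP; rewrite eqb0; apply: contra neq_uc => /eqP uc; apply/eqP/val_inj.
Qed.

Section PairCondition.

Variables (M N p : nat) (a : 'I_p -> 'I_M) (b : 'I_p -> 'I_N).

Definition pair_seq (u : nat) (g : 'I_p -> 'I_N) : seq (nat * nat) :=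
  [seq ((u + a y) %% M, val (g y)) | y : 'I_p].

Definition pair_cond (u v : nat) : bool :=
  perm_eq (pair_seq u b ++ pair_seq v (b \o @ordS p))
          (pair_seq u (b \o @ordS p) ++ pair_seq v b).

Lemma condE_pair r (i : 'I_r -> 'I_M) x :
  condE a b i x = pair_cond (i x) (i (ordS x)).
Proof. by []. Qed.

Lemma pair_seq0 g : pair_seq 0 g = [seq (val (a y), val (g y)) | y : 'I_p].
Proof. by apply: eq_map => y; rewrite add0n modn_small. Qed.

Lemma count_pair_seq u g c t :
  count (pred1 (c, t)) (pair_seq u g) =
  \sum_(y < p) (((u + a y) %% M == c) && (val (g y) == t)).
Proof. by rewrite count_map_ord. Qed.

Lemma sum_count_pair_seq g c t : c < M ->
  \sum_(u < M) count (pred1 (c, t)) (pair_seq u g) = \sum_(y < p) (val (g y) == t).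
Proof.
move=> cM; under eq_bigr do rewrite count_pair_seq.
rewrite exchange_big; apply: eq_bigr => y _.
case: (val (g y) == t); last by rewrite big1 // => u _; rewrite andbF.
by under eq_bigr do rewrite andbT; rewrite sum_ord_addn_mod.
Qed.

Lemma perm_eq_of_pair_cond : (forall u : 'I_M, pair_cond u 0) ->
  perm_eq [seq (val (a y), val (b y)) | y : 'I_p]
          [seq (val (a y), val (b (ordS y))) | y : 'I_p].
Proof.
move=> cond; apply/allP => -[c t] mem_ct; apply/eqP.
have cM : c < M by move: mem_ct; rewrite mem_cat => /orP[] /mapP[y _ [-> _]].
rewrite -pair_seq0 -(pair_seq0 (b \o @ordS p)).
have sum_cond :
    \sum_(u < M) (count_mem (c, t) (pair_seq u b)
                   + count_mem (c, t) (pair_seq 0 (b \o @ordS p))) =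
    \sum_(u < M) (count_mem (c, t) (pair_seq u (b \o @ordS p))
                   + count_mem (c, t) (pair_seq 0 b)).
  by apply: eq_bigr => u _; rewrite -!count_cat; move/permP: (cond u) => ->.
move: sum_cond; rewrite !big_split /= !sum_count_pair_seq //.
rewrite [X in X + _ = _](reindex_inj (@ordS_inj p)) !sum_nat_const !card_ord => /eqP.
by rewrite eqn_add2l eqn_pmul2l ?(leq_ltn_trans _ cM) // => /eqP.
Qed.

Lemma exists_not_pair_cond : 0 < M ->
  ~~ perm_eq [seq (val (a y), val (b y)) | y : 'I_p]
             [seq (val (a y), val (b (ordS y))) | y : 'I_p] ->
  exists u v : 'I_M, ~~ pair_cond u v.
Proof.
move=> M_gt0 not_perm.
have [u not_cond_u] : exists u : 'I_M, ~~ pair_cond u 0.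
  apply/existsP; apply: contraR not_perm; rewrite negb_exists => /forallP cond.
  by apply: perm_eq_of_pair_cond => u; apply/negPn/cond.
by exists u, (Ordinal M_gt0).
Qed.

End PairCondition.

Section PairedCoordinates.

Variables (T : finType) (r : nat).

Lemma double_lt (j : 'I_(r./2)) : j.*2 < r.
Proof. by have := ltn_ord j; lia. Qed.

Lemma double_succ_lt (j : 'I_(r./2)) : j.*2.+1 < r.
Proof. by have := ltn_ord j; lia. Qed.

Lemma odd_tail_lt (j : 'I_(odd r)) : (r./2).*2 + j < r.
Proof. by have := ltn_ord j; lia. Qed.

Definition pairs_of (i : {ffun 'I_r -> T}) : {ffun 'I_(r./2) -> T * T} :=
  [ffun j => (i (Ordinal (double_lt j)), i (Ordinal (double_succ_lt j)))].

Definition odd_tail_of (i : {ffun 'I_r -> T}) : {ffun 'I_(odd r) -> T} :=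
  [ffun j => i (Ordinal (odd_tail_lt j))].

Lemma pairs_tail_inj : injective (fun i => (pairs_of i, odd_tail_of i)).
Proof.
move=> i1 i2 [/ffunP eq_pairs /ffunP eq_tail]; apply/ffunP => x.
have [x_lt|x_ge] := ltnP x (r./2).*2.
  have half_lt : x./2 < r./2 by lia.
  move: (eq_pairs (Ordinal half_lt)); rewrite !ffunE => -[eq_even eq_odd].
  case: (boolP (odd x)) => odd_x.
    by have -> : x = Ordinal (double_succ_lt (Ordinal half_lt)) by apply: val_inj => /=; lia.
  by have -> : x = Ordinal (double_lt (Ordinal half_lt)) by apply: val_inj => /=; lia.
have tail_lt : x - (r./2).*2 < odd r by have := ltn_ord x; lia.
move: (eq_tail (Ordinal tail_lt)); rewrite !ffunE.
by have -> : Ordinal (odd_tail_lt (Ordinal tail_lt)) = x by apply: val_inj => /=; lia.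
Qed.

Lemma card_avoid_pair (w : T * T) (S : {set {ffun 'I_r -> T}}) :
  (forall i, i \in S -> forall j, pairs_of i j != w) ->
  #|S| <= (#|T| * #|T|).-1 ^ r./2 * #|T| ^ odd r.
Proof.
move=> avoid_w; rewrite -(card_imset _ pairs_tail_inj).
pose A := [set f : {ffun 'I_(r./2) -> T * T} | f \in ffun_on (predC1 w)].
have sub : [set (pairs_of i, odd_tail_of i) | i in S] \subset setX A setT.
  apply/subsetP => _ /imsetP [i iS ->].
  by rewrite !inE andbT; apply/forallP => j; rewrite inE; apply: avoid_w.
apply: leq_trans (subset_leq_card sub) _.
by rewrite cardsX cardsT card_ffun card_ord cardsE card_ffun_on card_ord cardC1 card_prod.
Qed.

End PairedCoordinates.

Lemma expn_mul_le B k : B ^ k * k <= B * B.+1 ^ k.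
Proof.
elim: k => [|k IH]; first by rewrite muln0.
have pow_le : B ^ k <= B.+1 ^ k by case: k IH => // k _; rewrite leq_exp2r.
rewrite !expnS; nia.
Qed.

Section Decay.

Variables (M N p : nat) (a : 'I_p -> 'I_M) (b : 'I_p -> 'I_N).
Variables (u0 v0 : 'I_M).
Hypothesis not_cond : ~~ pair_cond a b u0 v0.

Let M_gt0 : 0 < M := leq_ltn_trans (leq0n u0) (ltn_ord u0).

Lemma card_condE_mul_half_le r :
  #|[set i : {ffun 'I_r -> 'I_M} | [forall x, condE a b i x]]| * r./2
  <= (M * M).-1 * M ^ r.
Proof.
set S := [set i | _].
have card_S : #|S| <= (M * M).-1 ^ r./2 * M ^ odd r.
  have := @card_avoid_pair _ _ (u0, v0) S; rewrite card_ord; apply => i.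
  rewrite inE => /forallP cond_i j; rewrite ffunE; apply: contra not_cond => /eqP[<- <-].
  have -> : Ordinal (double_succ_lt j) = ordS (Ordinal (double_lt j)).
    by apply: val_inj; rewrite /= modn_small ?double_succ_lt.
  by rewrite -condE_pair cond_i.
have -> : M ^ r = (M * M).-1.+1 ^ r./2 * M ^ odd r.
  by rewrite prednK ?muln_gt0 ?M_gt0 // mulnn -expnM -expnD; congr (_ ^ _); lia.
apply: leq_trans (leq_mul card_S (leqnn _)) _.
by rewrite mulnAC mulnA leq_mul2r expn_mul_le orbT.
Qed.

Lemma Kpr_mul_half_le r : (Kpr a b r * (r./2)%:R <= ((M * M).-1)%:R)%R.
Proof.
rewrite /Kpr mulrAC ler_pdivrMr ?ltr0n ?expn_gt0 ?M_gt0 //.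
by rewrite -!natrM ler_nat card_condE_mul_half_le.
Qed.

End Decay.

Theorem proposition5p3 (M N p : nat) (a : 'I_p -> 'I_M) (b : 'I_p -> 'I_N) :
  (0 < M)%N -> (0 < N)%N -> (0 < p)%N ->
  ~~ perm_eq [seq (val (a y), val (b y)) | y : 'I_p]
             [seq (val (a y), val (b (ordS y))) | y : 'I_p] ->
  forall eps : rat, (0 < eps)%R ->
    exists R : nat, forall r : nat, (R <= r)%N -> (Kpr a b r < eps)%R.
Proof.
move=> M_gt0 _ _ not_perm eps eps_gt0.
have [u0 [v0 not_cond]] := exists_not_pair_cond M_gt0 not_perm.
set B := (M * M).-1.
have B_div_ge0 : (0 <= B%:R / eps)%R by rewrite divr_ge0 // ltW.
have K_gt := archi_boundP B_div_ge0; set K := Num.Def.archi_bound _ in K_gt.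
exists K.*2 => r le_r.
have half_gt : (B%:R / eps < (r./2)%:R)%R.
  by apply: lt_le_trans K_gt _; rewrite ler_nat; lia.
have half_gt0 : (0 < (r./2)%:R :> rat)%R by apply: le_lt_trans half_gt.
rewrite -(ltr_pM2r half_gt0); apply: le_lt_trans (Kpr_mul_half_le not_cond r) _.
by rewrite -ltr_pdivrMl // mulrC.
Qed.
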